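(* Let $H$ be a finite dimensional Hopf algebra over a field $k$. The following are equivalent: (a) (ITG) $\epsilon(\textstyle\int^r)\neq0$; (b) (Cond1); (c) (Cond1) and (Cond2).
   Context: Here $d=0$ is the injective dimension of $H$, $k=H/\ker\epsilon$, and $\textstyle\int^r=\operatorname{Hom}_{H^{\mathrm{op}}}(k_H,H_H)$, identified with the classical right integral $\{t\in H: th=t\epsilon(h)\ \forall h\}$; it is a $1$-dimensional left $H$-module. (Cond1): the map $\operatorname{Hom}_H(\textstyle\int^r,{}_HH)\to\operatorname{Hom}_H(\textstyle\int^r,{}_Hk)$ induced by $\epsilon$ is an isomorphism. (Cond2): for every simple left $H$-module $T\not\cong\textstyle\int^r$, $\operatorname{Hom}_H(T,k)=0$. *)

(* Finite dimensional Hopf algebras over a field K are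
   modelled as F-algebras  H : falgType K  (finite dimensional unital
   associative K-algebras, mathcomp/field/falgebra.v) equipped with a
   comultiplication, a counit and an antipode satisfying the Hopf axioms.
   Since MathComp has no tensor products, an element of H (x) H is written
   in coordinates w.r.t. the canonical basis  b := vbasis {:H}  of H:
   a matrix  t : 'M[K]_(n, n)  (n = \dim {:H}) stands for
   \sum_(i, j) t i j  b_i (x) b_j. *)
From HB Require Import structures.
From mathcomp Require Import all_boot all_order all_algebra all_field.
Set Implicit Arguments.
Unset Strict Implicit.
Unset Printing Implicit Defensive.
Import GRing.Theory.
Local Open Scope ring_scope.

Section Hopf.
Variables (K : fieldType) (H : falgType K).

Definition hdim : nat := \dim (fullv : {vspace H}).
Definition hb : hdim.-tuple H := vbasis (fullv : {vspace H}).
Definition hbi (i : 'I_hdim) : H := tnth hb i.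
Definition hcoord (i : 'I_hdim) (x : H) : K := coord hb i x.

Definition tens (x y : H) : 'M[K]_(hdim, hdim) :=
  \matrix_(i, j) (hcoord i x * hcoord j y).

Definition tapp (V : lmodType K) (t : 'M[K]_(hdim, hdim)) (F : H -> H -> V) : V :=
  \sum_(i < hdim) \sum_(j < hdim) t i j *: F (hbi i) (hbi j).

Definition tmul (s t : 'M[K]_(hdim, hdim)) : 'M[K]_(hdim, hdim) :=
  tapp s (fun x y => tapp t (fun x' y' => tens (x * x') (y * y'))).

Definition klin (U V : lmodType K) (f : U -> V) : Prop :=
  forall (a : K) (u v : U), f (a *: u + v) = a *: f u + f v.
Definition klinK (U : lmodType K) (f : U -> K) : Prop :=
  forall (a : K) (u v : U), f (a *: u + v) = a * f u + f v.

Definition is_hopf (D : H -> 'M[K]_(hdim, hdim)) (eps : H -> K) (S : H -> H) : Prop :=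
  [/\
      [/\ klin D, (forall x y, D (x * y) = tmul (D x) (D y)) & D 1 = tens 1 1],
      (* coassociativity: (Delta (x) id) Delta = (id (x) Delta) Delta,
         compared coefficientwise on the basis b_p (x) b_q (x) b_r *)
      (forall h p q r, \sum_(i < hdim) D h i r * D (hbi i) p q
                       = \sum_(j < hdim) D h p j * D (hbi j) q r),
      [/\ klinK eps, (forall x y, eps (x * y) = eps x * eps y) & eps 1 = 1],
      (forall h, tapp (D h) (fun x y => eps x *: y) = h /\
                 tapp (D h) (fun x y => eps y *: x) = h) &
      klin S /\
      (forall h, tapp (D h) (fun x y => S x * y) = eps h *: 1 /\
                 tapp (D h) (fun x y => x * S y) = eps h *: 1)].

Definition right_integral (eps : H -> K) (t : H) : Prop :=
  forall h : H, t * h = eps h *: t.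

Definition is_lmod (V : vectType K) (act : H -> V -> V) : Prop :=
  [/\ forall v, klin (act^~ v), forall h, klin (act h),
      (forall x y v, act (x * y) v = act x (act y v)) & (forall v, act 1 v = v)].

Definition is_simple_lmod (V : vectType K) (act : H -> V -> V) : Prop :=
  is_lmod act /\ (fullv : {vspace V}) != 0%VS /\
  forall U : {vspace V}, (forall h u, u \in U -> act h u \in U) ->
    U = 0%VS \/ U = fullv.

(* Elements of Hom_H(int^r, M), where int^r is a left H-module via left
   multiplication in H, are represented by functions f : H -> M whose
   restriction to int^r is K-linear and H-linear; two such are equal
   iff they agree on int^r. *)
Definition hom_int_H (eps : H -> K) (f : H -> H) : Prop :=
  (forall a u v, right_integral eps u -> right_integral eps v ->
     f (a *: u + v) = a *: f u + f v) /\
  (forall h t, right_integral eps t -> f (h * t) = h * f t).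

(* k = H / ker eps, i.e. K with h . c = eps(h) c *)
Definition hom_int_k (eps : H -> K) (g : H -> K) : Prop :=
  (forall a u v, right_integral eps u -> right_integral eps v ->
     g (a *: u + v) = a * g u + g v) /\
  (forall h t, right_integral eps t -> g (h * t) = eps h * g t).

(* (Cond1): Hom_H(int^r, H) -> Hom_H(int^r, k), f |-> eps o f, is bijective *)
Definition Cond1 (eps : H -> K) : Prop :=
  (forall f1 f2, hom_int_H eps f1 -> hom_int_H eps f2 ->
     (forall t, right_integral eps t -> eps (f1 t) = eps (f2 t)) ->
     forall t, right_integral eps t -> f1 t = f2 t) /\
  (forall g, hom_int_k eps g ->
     exists f, hom_int_H eps f /\ forall t, right_integral eps t -> eps (f t) = g t).

Definition iso_to_int (eps : H -> K) (V : vectType K) (act : H -> V -> V) : Prop :=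
  exists g : H -> V,
    [/\ forall a u v, right_integral eps u -> right_integral eps v ->
          g (a *: u + v) = a *: g u + g v,
        forall h t, right_integral eps t -> g (h * t) = act h (g t),
        forall u v, right_integral eps u -> right_integral eps v -> g u = g v -> u = v &
        forall w : V, exists2 t, right_integral eps t & g t = w].

Definition hom_to_k (eps : H -> K) (V : vectType K) (act : H -> V -> V) (g : V -> K) : Prop :=
  klinK g /\ forall h v, g (act h v) = eps h * g v.

Definition Cond2 (eps : H -> K) : Prop :=
  forall (V : vectType K) (act : H -> V -> V), is_simple_lmod act ->
    ~ iso_to_int eps act ->
    forall g : V -> K, hom_to_k eps act g -> forall v, g v = 0.

Definition ITG (eps : H -> K) : Prop :=
  exists2 t, right_integral eps t & eps t != 0.

End Hopf.

From HB Require Import structures.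
From mathcomp Require Import all_boot all_order all_algebra all_field.
From Stdlib Require Import Classical.
Set Implicit Arguments.
Unset Strict Implicit.
Unset Printing Implicit Defensive.
Import GRing.Theory.
Local Open Scope ring_scope.

(* Normalise a right integral [t] with [eps t != 0] to [e] with [eps e = 1].
   Since [S e] is a left integral, every right integral [t] equals
   [eps t *: e]; hence an H-linear map out of int^r is determined by its value
   at [e], which gives (Cond1), and a simple module [T] with [g v != 0] for an
   H-map [g : T -> k] is the line spanned by [e . v], hence isomorphic to
   int^r, which gives (Cond2).  Conversely, if [eps] vanishes on int^r, the
   zero map and the inclusion of int^r in H have the same image under (Cond1),
   so int^r = 0.  This is impossible: as in the fundamental theorem of Hopf
   modules, every [x] is recovered from the right integrals
   [integral_proj (b j)], which therefore cannot all vanish. *)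

Section KLinear.
Variable K : fieldType.

Lemma klin0 (U V : lmodType K) (f : U -> V) : klin f -> f 0 = 0.
Proof.
move=> hf; have := hf 1 0 0; rewrite !scale1r addr0 => f0D.
by apply: (addrI (f 0)); rewrite addr0 -f0D.
Qed.

Lemma klinD (U V : lmodType K) (f : U -> V) : klin f -> forall u v, f (u + v) = f u + f v.
Proof. by move=> hf u v; rewrite -[u in LHS]scale1r hf scale1r. Qed.

Lemma klinZ (U V : lmodType K) (f : U -> V) : klin f -> forall a u, f (a *: u) = a *: f u.
Proof. by move=> hf a u; rewrite -[a *: u]addr0 hf (klin0 hf) addr0. Qed.

Lemma klin_sum (U V : lmodType K) (f : U -> V) : klin f ->
  forall (I : Type) (r : seq I) (P : pred I) (F : I -> U),
  f (\sum_(i <- r | P i) F i) = \sum_(i <- r | P i) f (F i).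
Proof. by move=> hf I r P F; apply: big_morph; [apply: klinD | apply: klin0]. Qed.

Lemma klin_id (U : lmodType K) : klin (@id U).
Proof. by []. Qed.

Lemma klin_comp (U V W : lmodType K) (f : U -> V) (g : V -> W) :
  klin f -> klin g -> klin (fun x => g (f x)).
Proof. by move=> hf hg a u v; rewrite hf hg. Qed.

Lemma klin_amull (R : algType K) (c : R) : klin ( *%R c).
Proof. by move=> a u v; rewrite mulrDr -scalerAr. Qed.

Lemma klin_amulr (R : algType K) (c : R) : klin ( *%R^~ c).
Proof. by move=> a u v; rewrite mulrDl -scalerAl. Qed.

Lemma klin_scaler (U V : lmodType K) (f : U -> V) k : klin f -> klin (fun x => k *: f x).
Proof. by move=> hf a u v; rewrite hf scalerDr !scalerA mulrC. Qed.

(* [klinK f] is [klin f] for [f] viewed as a map into the regular module [K^o]. *)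
Lemma klinK0 (U : lmodType K) (f : U -> K) : klinK f -> f 0 = 0.
Proof. exact: (@klin0 U K^o f). Qed.

Lemma klinKZ (U : lmodType K) (f : U -> K) : klinK f -> forall a u, f (a *: u) = a * f u.
Proof. exact: (@klinZ U K^o f). Qed.

Lemma klinK_comp (U V : lmodType K) (f : U -> V) (g : V -> K) :
  klin f -> klinK g -> klinK (fun x => g (f x)).
Proof. exact: (@klin_comp U V K^o f g). Qed.

Lemma klinK_scale (U V : lmodType K) (g : U -> K) (d : V) :
  klinK g -> klin (fun x => g x *: d).
Proof. by move=> hg a u v; rewrite hg scalerDl scalerA. Qed.

End KLinear.

Section Tensors.
Variables (K : fieldType) (H : falgType K).
Local Notation n := (hdim H).
Local Notation b := (@hbi K H).

Lemma hexpand (x : H) : x = \sum_(i < n) hcoord i x *: b i.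
Proof.
rewrite [x in LHS](coord_vbasis (memvf x)); apply: eq_bigr => i _.
by rewrite /hbi (tnth_nth 0).
Qed.

Lemma klinK_hcoord (i : 'I_n) : klinK (@hcoord K H i).
Proof. by move=> a u v; rewrite /hcoord linearP. Qed.

Lemma klin_hexpand (V : lmodType K) (G : H -> V) :
  klin G -> forall x, G x = \sum_(i < n) hcoord i x *: G (b i).
Proof.
move=> hG x; rewrite [x in LHS]hexpand (klin_sum hG); apply: eq_bigr => i _.
by rewrite (klinZ hG).
Qed.

Lemma klinK_hexpand (G : H -> K) :
  klinK G -> forall x, G x = \sum_(i < n) hcoord i x * G (b i).
Proof. exact: (@klin_hexpand K^o G). Qed.

Definition bilin (V : lmodType K) (F : H -> H -> V) :=
  (forall y, klin (F^~ y)) /\ (forall x, klin (F x)).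

Lemma klin_tapp (V : lmodType K) (F : H -> H -> V) : klin (fun s => tapp s F).
Proof.
move=> a s t; rewrite /tapp scaler_sumr -big_split; apply: eq_bigr => i _.
rewrite scaler_sumr -big_split; apply: eq_bigr => j _.
by rewrite !mxE scalerDl scalerA.
Qed.

Lemma eq_tapp (V : lmodType K) s (F G : H -> H -> V) :
  (forall x y, F x y = G x y) -> tapp s F = tapp s G.
Proof. by move=> eFG; apply: eq_bigr => i _; apply: eq_bigr => j _; rewrite eFG. Qed.

Lemma tapp_klin (V W : lmodType K) (L : V -> W) s (F : H -> H -> V) :
  klin L -> L (tapp s F) = tapp s (fun x y => L (F x y)).
Proof.
move=> hL; rewrite /tapp (klin_sum hL); apply: eq_bigr => i _.
by rewrite (klin_sum hL); apply: eq_bigr => j _; rewrite (klinZ hL).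
Qed.

Lemma tappZ (V : lmodType K) s c (F : H -> H -> V) :
  tapp s (fun x y => c *: F x y) = c *: tapp s F.
Proof. by rewrite (tapp_klin _ _ (klin_scaler c (@klin_id _ V))). Qed.

Lemma tapp_mull s (F : H -> H -> H) c : tapp s (fun x y => F x y * c) = tapp s F * c.
Proof. by rewrite (tapp_klin _ _ (klin_amulr c)). Qed.

Lemma tapp_sum (V : lmodType K) s (I : Type) (r : seq I) (F : I -> H -> H -> V) :
  tapp s (fun x y => \sum_(k <- r) F k x y) = \sum_(k <- r) tapp s (F k).
Proof.
rewrite /tapp; under eq_bigr do under eq_bigr do rewrite scaler_sumr.
by under eq_bigr do rewrite exchange_big; rewrite exchange_big.
Qed.

Lemma exchange_tapp (V : lmodType K) s t (G : H -> H -> H -> H -> V) :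
  tapp s (fun x y => tapp t (G x y)) = tapp t (fun u v => tapp s (fun x y => G x y u v)).
Proof.
rewrite [RHS]/tapp; under [RHS]eq_bigr do under eq_bigr do rewrite -tappZ.
by under [RHS]eq_bigr do rewrite -tapp_sum; rewrite -tapp_sum.
Qed.

Lemma tapp_tens (V : lmodType K) (F : H -> H -> V) x y :
  bilin F -> tapp (tens x y) F = F x y.
Proof.
case=> hF1 hF2; rewrite /tapp (klin_hexpand (hF1 y) x); apply: eq_bigr => i _.
rewrite (klin_hexpand (hF2 (b i)) y) scaler_sumr; apply: eq_bigr => j _.
by rewrite mxE scalerA.
Qed.

End Tensors.

Section HopfAlgebra.
Variables (K : fieldType) (H : falgType K).
Variables (D : H -> 'M[K]_(hdim H, hdim H)) (eps : H -> K) (S : H -> H).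
Hypothesis hH : is_hopf D eps S.
Local Notation n := (hdim H).
Local Notation b := (@hbi K H).

Lemma klin_comul : klin D. Proof. by case: hH => [[]]. Qed.
Lemma comulM x y : D (x * y) = tmul (D x) (D y). Proof. by case: hH => [[]]. Qed.
Lemma comul1 : D 1 = tens 1 1. Proof. by case: hH => [[]]. Qed.
Lemma klinK_counit : klinK eps. Proof. by case: hH => _ _ []. Qed.
Lemma counitM x y : eps (x * y) = eps x * eps y. Proof. by case: hH => _ _ []. Qed.
Lemma counit1 : eps 1 = 1. Proof. by case: hH => _ _ []. Qed.
Lemma klin_antipode : klin S. Proof. by case: hH => _ _ _ _ []. Qed.

Lemma antipode_l h : tapp (D h) (fun x y => S x * y) = eps h *: 1.
Proof. by case: hH => _ _ _ _ [] _ /(_ h) []. Qed.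

Lemma antipode_r h : tapp (D h) (fun x y => x * S y) = eps h *: 1.
Proof. by case: hH => _ _ _ _ [] _ /(_ h) []. Qed.

Lemma klin_tapp_comul (V : lmodType K) (F : H -> H -> V) : klin (fun h => tapp (D h) F).
Proof. by move=> a u v; rewrite klin_comul; apply: klin_tapp. Qed.

Lemma tapp_counit_l (V : lmodType K) (G : H -> V) h :
  klin G -> tapp (D h) (fun x y => eps x *: G y) = G h.
Proof.
case: hH => _ _ _ /(_ h) [counit_l _] _ hG.
by rewrite -{2}counit_l (tapp_klin _ _ hG); apply: eq_tapp => x y; rewrite (klinZ hG).
Qed.

Lemma tapp_counit_r (V : lmodType K) (G : H -> V) h :
  klin G -> tapp (D h) (fun x y => eps y *: G x) = G h.
Proof.
case: hH => _ _ _ /(_ h) [_ counit_r] _ hG.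
by rewrite -{2}counit_r (tapp_klin _ _ hG); apply: eq_tapp => x y; rewrite (klinZ hG).
Qed.

Lemma tapp_comul_nest_l (V : lmodType K) (G : H -> H -> H -> V) h :
  tapp (D h) (fun x y => tapp (D x) (fun a c => G a c y)) =
  \sum_(p < n) \sum_(q < n) \sum_(r < n)
     (\sum_(i < n) D h i r * D (b i) p q) *: G (b p) (b q) (b r).
Proof.
rewrite /tapp; under eq_bigr do under eq_bigr do rewrite scaler_sumr.
under eq_bigr do under eq_bigr do under eq_bigr do rewrite scaler_sumr.
under eq_bigr do under eq_bigr do under eq_bigr do under eq_bigr do rewrite scalerA.
rewrite exchange_big; under eq_bigr do rewrite exchange_big.
under eq_bigr do under eq_bigr do rewrite exchange_big.
rewrite exchange_big; under eq_bigr do rewrite exchange_big.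
apply: eq_bigr => p _; apply: eq_bigr => q _; apply: eq_bigr => r _.
by rewrite scaler_suml.
Qed.

Lemma tapp_comul_nest_r (V : lmodType K) (G : H -> H -> H -> V) h :
  tapp (D h) (fun x y => tapp (D y) (fun a c => G x a c)) =
  \sum_(p < n) \sum_(q < n) \sum_(r < n)
     (\sum_(j < n) D h p j * D (b j) q r) *: G (b p) (b q) (b r).
Proof.
rewrite /tapp; under eq_bigr do under eq_bigr do rewrite scaler_sumr.
under eq_bigr do under eq_bigr do under eq_bigr do rewrite scaler_sumr.
under eq_bigr do under eq_bigr do under eq_bigr do under eq_bigr do rewrite scalerA.
under eq_bigr do rewrite exchange_big.
under eq_bigr do under eq_bigr do rewrite exchange_big.
apply: eq_bigr => p _; apply: eq_bigr => q _; apply: eq_bigr => r _.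
by rewrite scaler_suml.
Qed.

Lemma tapp_coassoc (V : lmodType K) (G : H -> H -> H -> V) h :
  tapp (D h) (fun x y => tapp (D x) (fun a c => G a c y)) =
  tapp (D h) (fun x y => tapp (D y) (fun a c => G x a c)).
Proof.
rewrite tapp_comul_nest_l tapp_comul_nest_r.
case: hH => _ coassoc _ _ _.
by under eq_bigr do under eq_bigr do under eq_bigr do rewrite coassoc.
Qed.

Lemma tapp_comulM (V : lmodType K) (F : H -> H -> V) x y : bilin F ->
  tapp (D (x * y)) F =
  tapp (D x) (fun a c => tapp (D y) (fun a' c' => F (a * a') (c * c'))).
Proof.
move=> hF; rewrite comulM /tmul (tapp_klin _ _ (klin_tapp F)).
apply: eq_tapp => a c; rewrite (tapp_klin _ _ (klin_tapp F)).
by apply: eq_tapp => a' c'; rewrite tapp_tens.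
Qed.

Lemma bilin_antipode_mul : bilin (fun x y : H => S x * y).
Proof. by split=> [y|x]; [apply: klin_comp klin_antipode (klin_amulr y) | apply: klin_amull]. Qed.

Lemma antipode1 : S 1 = 1.
Proof.
have := antipode_l 1; rewrite comul1 tapp_tens; last exact: bilin_antipode_mul.
by rewrite counit1 scale1r mulr1.
Qed.

Lemma counit_antipode h : eps (S h) = eps h.
Proof.
have klin_eps1 : klin (fun x : H => eps x *: (1 : H)) := klinK_scale 1 klinK_counit.
apply: (fmorph_inj (in_alg H)) => /=.
have -> : (eps h)%:A = eps (eps h *: 1) *: (1 : H) by rewrite (klinKZ klinK_counit) counit1 mulr1.
rewrite -(antipode_r h) (tapp_klin _ _ klin_eps1).
rewrite -(tapp_counit_l h (klin_comp klin_antipode klin_eps1)).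
by apply: eq_tapp => x y; rewrite /= counitM scalerA.
Qed.

Lemma tapp_antipode_comulM x y :
  tapp (D x) (fun a1 a2 => tapp (D y) (fun c1 c2 => S (a1 * c1) * (a2 * c2)))
  = (eps x * eps y)%:A.
Proof.
by rewrite -(tapp_comulM _ _ bilin_antipode_mul) antipode_l counitM.
Qed.

(* In Sweedler notation this is [S (a1 c1) a2 c2 S c3 S a3]: contracting
   [c2 S c3] and [a2 S a3] gives [S (a c)], while coassociativity lets
   [a1 c1 (x) a2 c2] be read as [D (a c)], which gives [S c * S a]. *)
Let antipode_sandwich a c := tapp (D a) (fun a1 x => tapp (D x) (fun a2 a3 =>
  tapp (D c) (fun c1 y => tapp (D y) (fun c2 c3 =>
    S (a1 * c1) * (a2 * (c2 * S c3) * S a3))))).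

Let antipode_sandwich_l a c : antipode_sandwich a c = S (a * c).
Proof.
have inner Q a2 a3 y : tapp (D y) (fun c2 c3 => Q * (a2 * (c2 * S c3) * S a3))
                        = eps y *: (Q * (a2 * S a3)).
  have hL : klin (fun z => Q * (a2 * z * S a3)).
    exact: klin_comp (klin_comp (klin_amull a2) (klin_amulr (S a3))) (klin_amull Q).
  by rewrite -(tapp_klin _ _ hL) antipode_r (klinZ hL) mulr1.
rewrite /antipode_sandwich; under eq_tapp => a1 x do under eq_tapp => a2 a3 do
  under eq_tapp => c1 y do rewrite inner.
under eq_tapp => a1 x do under eq_tapp => a2 a3 do
  rewrite (tapp_counit_r _ (klin_comp (klin_comp (klin_amull a1) klin_antipode) (klin_amulr _))).
under eq_tapp => a1 x do
  rewrite -(tapp_klin _ _ (klin_amull _)) antipode_r (klinZ (klin_amull _)) mulr1.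
by rewrite (tapp_counit_r _ (klin_comp (klin_amulr c) klin_antipode)).
Qed.

Let antipode_sandwich_r a c : antipode_sandwich a c = S c * S a.
Proof.
have reassoc p q r s t : p * (q * (r * s) * t) = p * (q * r) * (s * t).
  by rewrite !mulrA.
rewrite /antipode_sandwich; under eq_tapp => a1 x do under eq_tapp => a2 a3 do
  rewrite -(tapp_coassoc (fun c1 c2 c3 => S (a1 * c1) * (a2 * (c2 * S c3) * S a3)) c).
rewrite -(tapp_coassoc (fun a1 a2 a3 => tapp (D c) (fun y c3 => tapp (D y)
           (fun c1 c2 => S (a1 * c1) * (a2 * (c2 * S c3) * S a3)))) a).
under eq_tapp => x a3 do rewrite exchange_tapp.
under eq_tapp => x a3 do under eq_tapp => y c3 do
  under eq_tapp => a1 a2 do under eq_tapp => c1 c2 do rewrite reassoc.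
under eq_tapp => x a3 do under eq_tapp => y c3 do
  under eq_tapp => a1 a2 do rewrite tapp_mull.
under eq_tapp => x a3 do under eq_tapp => y c3 do
  rewrite tapp_mull tapp_antipode_comulM mulr_algl -scalerA.
under eq_tapp => x a3 do
  rewrite tappZ (tapp_counit_l _ (klin_comp klin_antipode (klin_amulr (S a3)))).
by rewrite (tapp_counit_l _ (klin_comp klin_antipode (klin_amull (S c)))).
Qed.

Lemma antipodeM a c : S (a * c) = S c * S a.
Proof. by rewrite -antipode_sandwich_l antipode_sandwich_r. Qed.

Lemma antipode_right_integral t :
  right_integral eps t -> forall x, x * S t = eps x *: S t.
Proof.
move=> ht x; rewrite -(tapp_counit_r _ (klin_amulr (S t))).
have -> : eps x *: S t = (eps x *: 1) * S t by rewrite -scalerAl mul1r.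
rewrite -antipode_r -tapp_mull.
by apply: eq_tapp => x1 x2; rewrite -mulrA -antipodeM ht (klinZ klin_antipode) scalerAr.
Qed.

Lemma right_integral_unique e : right_integral eps e -> eps e = 1 ->
  forall t, right_integral eps t -> t = eps t *: e.
Proof.
move=> he e1.
have eq_Se t : right_integral eps t -> t = eps t *: S e.
  move=> ht; rewrite -(antipode_right_integral he) ht counit_antipode e1.
  by rewrite scale1r.
by move=> t ht; rewrite {1}(eq_Se t ht) {2}(eq_Se e he) e1 scale1r.
Qed.

Section Twist.
Variables (V : lmodType K) (G : H -> V) (phi : H -> K).
Hypotheses (klin_G : klin G) (klinK_phi : klinK phi).

Let klin_phi_S z (v : V) : klin (fun w => phi (z * S w) *: v).
Proof. exact: klinK_scale v (klinK_comp (klin_comp klin_antipode (klin_amull z)) klinK_phi). Qed.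

Lemma tapp_antipode_twist_l z h :
  tapp (D h) (fun h1 u => tapp (D u) (fun h2 h3 => phi (z * S h2 * S (S h1)) *: G h3))
  = phi z *: G h.
Proof.
rewrite -(tapp_coassoc (fun h1 h2 h3 => phi (z * S h2 * S (S h1)) *: G h3)).
under eq_tapp => u h3.
  under eq_tapp => h1 h2 do rewrite -mulrA -antipodeM.
  rewrite -(tapp_klin _ _ (klin_phi_S z (G h3))) antipode_l.
  rewrite (klinZ (klin_phi_S z (G h3))) antipode1 mulr1.
  over.
by rewrite (tapp_counit_l _ (klin_scaler _ klin_G)).
Qed.

Lemma tapp_antipode_twist_r z h :
  tapp (D h) (fun h1 u => tapp (D u) (fun h2 h3 => phi (z * S (h1 * S h2)) *: G h3))
  = phi z *: G h.
Proof.
rewrite -(tapp_coassoc (fun h1 h2 h3 => phi (z * S (h1 * S h2)) *: G h3)).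
under eq_tapp => u h3.
  rewrite -(tapp_klin _ _ (klin_phi_S z (G h3))) antipode_r.
  rewrite (klinZ (klin_phi_S z (G h3))) antipode1 mulr1.
  over.
by rewrite (tapp_counit_l _ (klin_scaler _ klin_G)).
Qed.

End Twist.

(* [sum_i b^i (y S^2 (b_i1)) b_i2] in Sweedler notation, [b^i] the dual
   basis: the map onto right integrals from the proof of the fundamental
   theorem of Hopf modules. *)
Definition integral_proj y :=
  \sum_(i < n) tapp (D (b i)) (fun a c => hcoord i (y * S (S a)) *: c).

Let klinK_hcoord_mulr i z : klinK (fun w : H => hcoord i (w * z)).
Proof. exact: klinK_comp (klin_amulr z) (klinK_hcoord i). Qed.

Lemma integral_proj_reconstruct x :
  \sum_(j < n) tapp (D (integral_proj (b j))) (fun c d => hcoord j (x * S c) *: d) = x.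
Proof.
transitivity (\sum_(i < n) tapp (D (b i)) (fun a u =>
    tapp (D u) (fun c d => hcoord i (x * S c * S (S a)) *: d))); last first.
  rewrite [RHS]hexpand; apply: eq_bigr => i _.
  exact: tapp_antipode_twist_l (@klin_id _ H) (klinK_hcoord i) x (b i).
under eq_bigr => j _.
  rewrite /integral_proj (klin_sum (klin_tapp_comul _)).
  under eq_bigr => i _.
    rewrite (tapp_klin _ _ (klin_tapp_comul _)).
    under eq_tapp => a c do rewrite (klinZ (klin_tapp_comul _)).
    over.
  over.
rewrite exchange_big /=; apply: eq_bigr => i _.
rewrite -tapp_sum; apply: eq_tapp => a u.
under eq_bigr do rewrite -tappZ.
rewrite -tapp_sum; apply: eq_tapp => c d.
rewrite (klinK_hexpand (klinK_hcoord_mulr i (S (S a))) (x * S c)) scaler_suml.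
by apply: eq_bigr => j _; rewrite scalerA mulrC.
Qed.

(* Expanding [D (b i * h2)] and using coassociativity turns this sum into
   [integral_proj y * h]; expanding [y S^2 a S h1] in the basis turns it into
   [eps h *: integral_proj y]. *)
Let integral_proj_shift y h := tapp (D h) (fun h1 h2 =>
  \sum_(i < n) tapp (D (b i * h2)) (fun a c => hcoord i (y * S (S a) * S h1) *: c)).

Let integral_proj_shift_counit y h : integral_proj_shift y h = eps h *: integral_proj y.
Proof.
pose P (j : 'I_n) (z : H) := tapp (D z) (fun a c => hcoord j (y * S (S a)) *: c).
have klin_P j : klin (P j) := klin_tapp_comul _.
have sum_P j h1 h2 : \sum_(i < n) tapp (D (b i * h2))
      (fun a c => (hcoord j (y * S (S a)) * hcoord i (b j * S h1)) *: c)
    = P j (b j * S h1 * h2).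
  rewrite [in RHS](hexpand (b j * S h1)) mulr_suml (klin_sum (klin_P j)).
  apply: eq_bigr => i _; rewrite -scalerAl (klinZ (klin_P j)) -tappZ.
  by apply: eq_tapp => a c; rewrite scalerA mulrC.
rewrite /integral_proj_shift.
under eq_tapp => h1 h2.
  under eq_bigr => i _.
    under eq_tapp => a c.
      rewrite (klinK_hexpand (klinK_hcoord_mulr i (S h1)) (y * S (S a))) scaler_suml.
      over.
    rewrite tapp_sum.
    over.
  rewrite exchange_big /=.
  under eq_bigr => j _ do rewrite sum_P.
  over.
rewrite tapp_sum /integral_proj scaler_sumr; apply: eq_bigr => j _.
under eq_tapp => h1 h2 do rewrite -mulrA.
rewrite -(tapp_klin _ _ (klin_comp (klin_amull (b j)) (klin_P j))).
by rewrite antipode_l -scalerAr mulr1 (klinZ (klin_P j)).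
Qed.

Let integral_proj_shift_mul y h : integral_proj_shift y h = integral_proj y * h.
Proof.
have bilin_F i h1 : bilin (fun a c : H => hcoord i (y * S (S a) * S h1) *: c).
  split=> [c|a]; last exact: klin_scaler _ (@klin_id _ H).
  apply: klinK_scale c (klinK_comp _ (klinK_hcoord_mulr i (S h1))).
  exact: klin_comp (klin_comp klin_antipode klin_antipode) (klin_amull y).
have S2M a1 a2 h1 : y * S (S (a1 * a2)) * S h1 = y * S (S a1) * S (h1 * S a2).
  by rewrite !antipodeM !mulrA.
rewrite /integral_proj_shift.
under eq_tapp => h1 h2 do
  under eq_bigr => i _ do rewrite (tapp_comulM _ _ (bilin_F i h1)).
rewrite tapp_sum; under eq_bigr do rewrite exchange_tapp.
rewrite /integral_proj mulr_suml; apply: eq_bigr => i _.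
rewrite -tapp_mull; apply: eq_tapp => a1 c1.
under eq_tapp => h1 h2 do under eq_tapp => a2 c2 do rewrite S2M.
rewrite (tapp_antipode_twist_r (klin_amull c1) (klinK_hcoord i)).
by rewrite scalerAl.
Qed.

Lemma integral_proj_right_integral y : right_integral eps (integral_proj y).
Proof. by move=> h; rewrite -integral_proj_shift_mul integral_proj_shift_counit. Qed.

Lemma right_integral_neq0 : exists2 t, right_integral eps t & t != 0.
Proof.
have [j proj_j_neq0 | all_proj_eq0] := pickP (fun j => integral_proj (b j) != 0).
  by exists (integral_proj (b j)); [apply: integral_proj_right_integral | ].
have := integral_proj_reconstruct 1; rewrite big1 => [/eqP|j _].
  by rewrite eq_sym oner_eq0.
move/negbFE/eqP: (all_proj_eq0 j) => ->; rewrite (klin0 klin_comul).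
by rewrite /tapp big1 // => i _; rewrite big1 // => k _; rewrite mxE scale0r.
Qed.

Lemma right_integralMl h t : right_integral eps t -> right_integral eps (h * t).
Proof. by move=> ht x; rewrite -mulrA ht scalerAr. Qed.

Lemma right_integralZ a t : right_integral eps t -> right_integral eps (a *: t).
Proof. by move=> ht x; rewrite -scalerAl ht !scalerA mulrC. Qed.

Lemma ITG_normalized : ITG eps -> exists2 e, right_integral eps e & eps e = 1.
Proof.
case=> t ht eps_t_neq0; exists ((eps t)^-1 *: t); first exact: right_integralZ.
by rewrite (klinKZ klinK_counit) mulVf.
Qed.

Lemma ITG_Cond1 : ITG eps -> Cond1 eps.
Proof.
case/ITG_normalized=> e he e1.
have mul_e t : right_integral eps t -> t * e = t by move=> ht; rewrite ht e1 scale1r.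
have homE f : hom_int_H eps f -> forall t, right_integral eps t -> f t = eps (f e) *: t.
  move=> [_ fM] t ht.
  have fe : f e = eps (f e) *: e by rewrite -{1}(mul_e e he) fM // he.
  by rewrite -{1}(mul_e t ht) fM // fe -scalerAr mul_e.
split=> [f1 f2 hf1 hf2 eq_eps t ht | g [_ gM]].
  by rewrite (homE f1 hf1 t ht) (homE f2 hf2 t ht) (eq_eps e he).
exists (fun x => g e *: x); split.
- by split=> [a u v _ _ | h t _]; rewrite ?scalerDr ?scalerA ?(mulrC a) // scalerAr.
- by move=> t ht; rewrite (klinKZ klinK_counit) -{2}(mul_e t ht) gM // mulrC.
Qed.

Lemma Cond1_ITG : Cond1 eps -> ITG eps.
Proof.
case=> hom_inj _; apply: NNPP => not_ITG.
have eps_int0 t : right_integral eps t -> eps t = 0.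
  by move=> ht; case: (eqVneq (eps t) 0) => // ?; case: not_ITG; exists t.
have [t ht /eqP[]] := right_integral_neq0.
have hom0 : hom_int_H eps (fun _ => 0).
  by split=> *; rewrite ?scaler0 ?addr0 ?mulr0.
have homid : hom_int_H eps id by [].
apply: esym (hom_inj _ _ hom0 homid _ t ht) => u hu.
by rewrite (klinK0 klinK_counit) eps_int0.
Qed.

Section SimpleModule.
Variables (V : vectType K) (act : H -> V -> V) (g : V -> K).
Hypotheses (simple_act : is_simple_lmod act) (hom_g : hom_to_k eps act g).

Lemma hom_to_k_neq0_iso_to_int e v : right_integral eps e -> eps e = 1 ->
  g v != 0 -> iso_to_int eps act.
Proof.
move=> he e1 gv_neq0.
case: simple_act hom_g => -[klin_act_l klin_act_r actM _] [_ simple] [klinK_g gM].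
have uniq_e := right_integral_unique he e1.
pose w := act e v.
have w_neq0 : w != 0.
  by apply: contraNneq gv_neq0 => w0; rewrite -[g v]mul1r -e1 -gM -/w w0 klinK0.
have act_e a : act (a *: e) v = a *: w by rewrite (klinZ (klin_act_l v)).
have stable_w h u : u \in <[w]>%VS -> act h u \in <[w]>%VS.
  case/vlineP=> a ->; apply/vlineP; exists (a * eps h).
  rewrite (klinZ (klin_act_r h)) /w -actM (uniq_e _ (right_integralMl h he)).
  by rewrite counitM e1 mulr1 act_e scalerA.
have line_full : <[w]>%VS = fullv.
  case: (simple _ stable_w) => // w0.
  by move: w_neq0; rewrite -memv0 -w0 memv_line.
exists (fun x => act x v); split.
- by move=> a u u' _ _; rewrite klin_act_l.
- by move=> h t _; rewrite actM.
- move=> u u' hu hu'; rewrite (uniq_e u hu) (uniq_e u' hu') !act_e => /eqP.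
  by rewrite -subr_eq0 -scalerBl scaler_eq0 (negPf w_neq0) orbF subr_eq0 => /eqP ->.
- move=> w'; have /vlineP[a ->] : w' \in <[w]>%VS by rewrite line_full memvf.
  by exists (a *: e); [apply: right_integralZ | rewrite act_e].
Qed.

End SimpleModule.

Lemma Cond1_Cond2 : Cond1 eps -> Cond2 eps.
Proof.
move/Cond1_ITG/ITG_normalized=> [e he e1] V act simple_act not_iso g hom_g v.
case: (eqVneq (g v) 0) => // gv_neq0; case: not_iso.
exact: (hom_to_k_neq0_iso_to_int simple_act hom_g he e1 gv_neq0).
Qed.

End HopfAlgebra.

Theorem lemma3p5 (K : fieldType) (H : falgType K)
    (D : H -> 'M[K]_(hdim H, hdim H)) (eps : H -> K) (S : H -> H) :
  is_hopf D eps S ->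
  (ITG eps <-> Cond1 eps) /\ (Cond1 eps <-> Cond1 eps /\ Cond2 eps).
Proof.
move=> hH; split; first by split; [exact: ITG_Cond1 hH | exact: Cond1_ITG hH].
by split=> [c1 | []//]; split; last exact: Cond1_Cond2 hH c1.
Qed.
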